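(* If $G$ is a cubic (3-regular) graph, then $\mathrm{TC}_2(G)=3$ and $\mathrm{TC}_3(G)=2$.
   Context: All graphs are finite, simple and connected. $N(v)$ denotes the open neighborhood of $v$. For $\delta(G)\ge k$, a set $S\subseteq V(G)$ is a total $k$-dominating set if $|N(v)\cap S|\ge k$ for every $v\in V(G)$. Two disjoint sets $U,W\subseteq V(G)$ form a total $k$-coalition if neither is a total $k$-dominating set but $U\cup W$ is. A total $k$-coalition partition of $G$ is a partition $\Omega$ of $V(G)$ in which every set forms a total $k$-coalition with some other set of $\Omega$; $\mathrm{TC}_k(G)$ is the maximum cardinality of such a partition. *)

From mathcomp Require Import all_boot.
Set Implicit Arguments. Unset Strict Implicit. Unset Printing Implicit Defensive.

Definition simple_graph (T : finType) (e : rel T) : Prop :=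
  symmetric e /\ irreflexive e.

Definition connected_graph (T : finType) (e : rel T) : Prop :=
  forall x y : T, connect e x y.

Definition nbhd (T : finType) (e : rel T) (v : T) : {set T} := [set u | e v u].

Definition cubic (T : finType) (e : rel T) : Prop :=
  forall v : T, #|nbhd e v| = 3.

Definition total_k_dom (T : finType) (e : rel T) (k : nat) (S : {set T}) : bool :=
  [forall v, k <= #|nbhd e v :&: S|].

Definition total_k_coalition (T : finType) (e : rel T) (k : nat) (U W : {set T}) : bool :=
  [&& [disjoint U & W], ~~ total_k_dom e k U, ~~ total_k_dom e k W
    & total_k_dom e k (U :|: W)].

Definition total_k_coalition_partition (T : finType) (e : rel T) (k : nat)
    (P : {set {set T}}) : bool :=
  partition P [set: T] &&
  [forall U in P, exists W in P, (W != U) && total_k_coalition e k U W].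

Definition TC (T : finType) (e : rel T) (k : nat) : nat :=
  \max_(P : {set {set T}} | total_k_coalition_partition e k P) #|P|.

From mathcomp Require Import all_boot zify.
Set Implicit Arguments.
Unset Strict Implicit.
Unset Printing Implicit Defensive.

(* Call two classes of a total k-coalition partition adjacent when their
   union is total k-dominating.  For k = 2 in a cubic graph, a vertex cannot
   see two vertices of each of two disjoint sets, so any two adjacent pairs of
   classes share a class; and a class C cannot be adjacent to three others:
   C is not total 2-dominating, and a vertex seeing at most one vertex of C
   would have to see a vertex of each of the three others, i.e. four
   neighbours.  Every class has a neighbour,
   and a graph with no isolated vertex, no two disjoint edges and no vertex of
   degree 3 has at most 3 vertices.  For k = 3, a total 3-dominating set of a
   cubic graph contains every neighbourhood, hence is V, so the two classes of
   any 3-coalition already exhaust the partition.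
   Conversely, for a vertex v and S a subset of N(v) with |S| = 4 - k, the
   singletons of S together with V \ S form a total k-coalition partition:
   {x} ∪ (V \ S) = V \ (S \ {x}) misses at most 3 - k neighbours of any
   vertex, while V \ S contains only k - 1 neighbours of v. *)

Section IntersectingEdges.
Variables (V : finType) (r : rel V) (A : {set V}).
Hypotheses (r_sym : symmetric r) (r_irr : irreflexive r).
Hypothesis no_isolated : {in A, forall x, exists2 y, y \in A & r x y}.
Hypothesis edges_meet : {in A &, forall x y, {in A &, forall x' y',
  r x y -> r x' y' -> ~~ uniq [:: x; y; x'; y']}}.
Hypothesis claw_free : {in A & &, forall c a b, {in A, forall d,
  r c a -> r c b -> r c d -> ~~ uniq [:: c; a; b; d]}}.

Lemma intersecting_clawfree_card_le3 : #|A| <= 3.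
Proof.
rewrite leqNgt; apply/negP => A_gt3.
have [x xA] : exists x, x \in A by apply/card_gt0P; lia.
have [y yA rxy] := no_isolated xA.
have xy : x != y by apply: contraTneq rxy => ->; rewrite r_irr.
have yx : y != x by rewrite eq_sym.
have : 1 < #|A :\: [set x; y]|.
  rewrite cardsD (setIidPr _) ?cards2 ?xy; first lia.
  by apply/subsetP => z /set2P[]->.
move=> /card_gt1P [z1 [z2 [+ + z12]]]; rewrite !inE !negb_or.
move=> /andP[/andP[z1x z1y] z1A] /andP[/andP[z2x z2y] z2A].
have adj_xy z : z \in A -> z != x -> z != y -> r z x || r z y.
  move=> zA zx zy; have [w wA rzw] := no_isolated zA.
  have := edges_meet xA yA zA wA rxy rzw.
  rewrite /= !inE !negb_or xy !(eq_sym _ z) zx zy /= !andbT !negb_and !negbK.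
  case/or3P => /eqP wE;
    by move: rzw; rewrite -wE ?r_irr // => ->; rewrite ?orbT.
have uniq4 a b c d :
  [&& a != b, a != c, a != d, b != c, b != d & c != d] -> uniq [:: a; b; c; d].
  by rewrite /= !inE !negb_or !andbT -!andbA.
(* z1 and z2 attached to the same end of xy form a claw there, to different
   ends two disjoint edges. *)
have [r1|r1] := orP (adj_xy z1 z1A z1x z1y);
  have [r2|r2] := orP (adj_xy z2 z2A z2x z2y).
- have := claw_free xA yA z1A z2A rxy; rewrite !(r_sym x) r1 r2.
  move=> /(_ isT isT)/negP; apply; apply: uniq4.
  by rewrite xy !(eq_sym x) z1x z2x !(eq_sym y) z1y z2y z12.
- have := edges_meet z1A xA z2A yA r1 r2 => /negP; apply; apply: uniq4.
  by rewrite z1x z12 z1y xy (eq_sym x) z2x z2y.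
- have := edges_meet z1A yA z2A xA r1 r2 => /negP; apply; apply: uniq4.
  by rewrite z1y z12 z1x yx (eq_sym y) z2y z2x.
- have := claw_free yA xA z1A z2A; rewrite r_sym rxy !(r_sym y) r1 r2.
  move=> /(_ isT isT isT)/negP; apply; apply: uniq4.
  by rewrite yx !(eq_sym y) !(eq_sym x) z1x z2x z1y z2y z12.
Qed.

End IntersectingEdges.

Lemma sum_card_setI_pairwise_disjoint (T : finType) (N : {set T})
    (s : seq {set T}) :
  pairwise (fun X Y : {set T} => [disjoint X & Y]) s ->
  \sum_(X <- s) #|N :&: X| <= #|N|.
Proof.
elim: s N => [|X s IHs] N; first by rewrite big_nil.
rewrite pairwise_cons big_cons => /andP[/allP dX_s /(IHs (N :\: X))].
rewrite -(cardsID X N) leq_add2l; congr (_ <= _).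
apply: eq_big_seq => Y /dX_s; rewrite disjoint_sym disjoints_subset => YX.
by rewrite setDE -setIA (setIidPr YX).
Qed.

Lemma card_setIU_le (T : finType) (N X Y : {set T}) :
  #|N :&: (X :|: Y)| <= #|N :&: X| + #|N :&: Y|.
Proof. by rewrite setIUr leq_card_setU. Qed.

Lemma total_k_coalitionC (T : finType) (e : rel T) k (U W : {set T}) :
  total_k_coalition e k U W = total_k_coalition e k W U.
Proof.
rewrite /total_k_coalition disjoint_sym setUC.
by case: (total_k_dom e k U); case: (total_k_dom e k W); rewrite ?andbF.
Qed.

Definition regular (T : finType) (e : rel T) (r : nat) : Prop :=
  forall v, #|nbhd e v| = r.

Lemma regular_total_dom_setT (T : finType) (e : rel T) k (S : {set T}) :
  symmetric e -> regular e k -> 0 < k -> total_k_dom e k S -> S = setT.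
Proof.
move=> e_sym reg k_gt0 /forallP domS; apply/setP => x; rewrite inE.
have /card_gt0P[y] : 0 < #|nbhd e x| by rewrite reg.
rewrite inE e_sym => yx; have := domS y.
rewrite -(reg y) (geq_leqif (subset_leqif_cards (subsetIl _ S))).
by move=> /eqP/setIidPl/subsetP; apply; rewrite inE.
Qed.

Section CoalitionPartition.
Variables (T : finType) (e : rel T) (k : nat) (P : {set {set T}}).
Hypothesis tcpP : total_k_coalition_partition e k P.

Let partP : partition P [set: T] := proj1 (andP tcpP).
Let tiP : trivIset P := partition_trivIset partP.

Lemma coalition_partition_partner X :
  X \in P -> exists2 Y, Y \in P & (Y != X) && total_k_coalition e k X Y.
Proof. by case/andP: tcpP => _ /forall_inP tcp /tcp /exists_inP. Qed.

Lemma coalition_partition_nondom X : X \in P -> ~~ total_k_dom e k X.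
Proof. by case/coalition_partition_partner => Y _ /andP[_ /and4P[]]. Qed.

Lemma coalition_partition_pairwise_disjoint s : {subset s <= P} -> uniq s ->
  pairwise (fun X Y : {set T} => [disjoint X & Y]) s.
Proof.
move=> sP; rewrite uniq_pairwise.
by apply: (@sub_in_pairwise _ (mem P)); [apply/trivIsetP | apply/allP].
Qed.

Lemma coalition_partition_card_le3 :
  1 < k -> (forall v, #|nbhd e v| <= k.+1) -> #|P| <= 3.
Proof.
move=> k_gt1 deg_le.
pose adj := [rel X Y : {set T} | (X != Y) && total_k_dom e k (X :|: Y)].
have adj_dom v X Y : adj X Y -> k <= #|nbhd e v :&: X| + #|nbhd e v :&: Y|.
  by case/andP=> _ /forallP/(_ v)/leq_trans; apply; apply: card_setIU_le.
have sum_le v s : all [in P] s -> uniq s ->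
    \sum_(X <- s) #|nbhd e v :&: X| <= k.+1.
  move=> /allP sP us; apply: leq_trans (deg_le v).
  exact/sum_card_setI_pairwise_disjoint/coalition_partition_pairwise_disjoint.
apply: (@intersecting_clawfree_card_le3 _ adj).
- by move=> X Y /=; rewrite eq_sym setUC.
- by move=> X /=; rewrite eqxx.
- move=> X /coalition_partition_partner[Y YP /andP[YX /and4P[_ _ _ domXY]]].
  by exists Y; rewrite //= eq_sym YX.
- move=> X Y XP YP X' Y' X'P Y'P aXY aX'Y'; apply/negP => uniq_s.
  have /set0Pn[v _] := partition_neq0 partP XP.
  have := sum_le v _ _ uniq_s; rewrite /= XP YP X'P Y'P !big_cons big_nil.
  have := adj_dom v _ _ aXY; have := adj_dom v _ _ aX'Y'; lia.
- move=> C A B CP AP BP D DP aCA aCB aCD; apply/negP => uniq_s.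
  have /forallPn[v] := coalition_partition_nondom CP; rewrite -ltnNge.
  have := sum_le v _ _ uniq_s; rewrite /= CP AP BP DP !big_cons big_nil.
  have := adj_dom v _ _ aCA; have := adj_dom v _ _ aCB.
  have := adj_dom v _ _ aCD; lia.
Qed.

Lemma coalition_partition_card_le2 :
  symmetric e -> regular e k -> 0 < k -> #|P| <= 2.
Proof.
move=> e_sym reg k_gt0.
have [-> | [U UP]] := set_0Vmem P; first by rewrite cards0.
have [W WP /andP[_ /and4P[_ _ _ domUW]]] := coalition_partition_partner UP.
have UW := regular_total_dom_setT e_sym reg k_gt0 domUW.
apply: leq_trans (_ : #|[set U; W]| <= 2); last by rewrite cards2 ltnS leq_b1.
apply/subset_leq_card/subsetP => Z ZP.
have /set0Pn[z zZ] := partition_neq0 partP ZP.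
have : z \in U :|: W by rewrite UW inE.
rewrite -(def_pblock tiP ZP zZ) !inE => /orP[] zX;
  by rewrite (def_pblock tiP _ zX) ?eqxx ?orbT.
Qed.

End CoalitionPartition.

Section SingletonsComplement.
Variable T : finType.
Implicit Types S : {set T}.

Definition singletons_compl S : {set {set T}} :=
  ~: S |: [set [set x] | x in S].

Lemma partition_singletons S : partition [set [set x] | x in S] S.
Proof.
have Q0 : set0 \notin [set [set x] | x in S].
  by apply/imsetP => -[x _ x0]; have := in_set0 x; rewrite x0 inE eqxx.
have [ti _] : trivIset [set [set x] | x in S] /\ {in S &, injective set1}.
  by apply: trivIimset Q0 => x y _ _ yx; rewrite disjoints1 inE eq_sym.
rewrite /partition ti Q0 cover_imset !andbT; apply/eqP/setP => y.
by apply/bigcupP/idP => [[x xS /set1P -> //] | yS]; exists y; rewrite ?inE.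
Qed.

Lemma partition_singletons_compl S :
  ~: S != set0 -> partition (singletons_compl S) [set: T].
Proof.
move=> nS0; rewrite -(setUCr S) setUC.
by apply: partitionU1 (partition_singletons S) nS0 _; rewrite disjoints_subset.
Qed.

Lemma card_singletons_compl S : #|singletons_compl S| = #|S|.+1.
Proof.
rewrite cardsU1 card_imset; last exact: set1_inj.
suff -> : ~: S \notin [set [set x] | x in S] by [].
by apply/imsetP => -[x xS /setP /(_ x)]; rewrite !inE eqxx xS.
Qed.

End SingletonsComplement.

Section SingletonsComplementCoalition.
Variables (T : finType) (e : rel T) (r k : nat) (v : T) (S : {set T}).
Hypotheses (e_irr : irreflexive e) (reg : regular e r) (k_gt1 : 1 < k).
Hypotheses (S_nbhd : S \subset nbhd e v) (card_S : #|S| = r.+1 - k).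

Lemma total_k_coalition_singleton_compl x :
  x \in S -> total_k_coalition e k [set x] (~: S).
Proof.
move=> xS; apply/and4P; split.
- by rewrite disjoints1 inE negbK.
- apply/forallPn; exists v; rewrite -ltnNge; apply: leq_ltn_trans k_gt1.
  by rewrite -(cards1 x) subset_leq_card ?subsetIr.
- apply/forallPn; exists v; rewrite -ltnNge -setDE cardsD (setIidPr S_nbhd).
  rewrite reg card_S; lia.
- apply/forallP => u; rewrite setUC -setCD -setDE cardsD reg.
  have := subset_leq_card (subsetIr (nbhd e u) (S :\ x)).
  have := cardsD1 x S; rewrite xS card_S; lia.
Qed.

Lemma singletons_compl_coalition_partition :
  0 < #|S| -> total_k_coalition_partition e k (singletons_compl S).
Proof.
move=> /card_gt0P[x xS].
have vS : v \in ~: S.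
  by rewrite inE; apply/negP => /(subsetP S_nbhd); rewrite inE e_irr.
rewrite /total_k_coalition_partition partition_singletons_compl; last first.
  by apply/set0Pn; exists v.
apply/forall_inP => X /setU1P[-> | /imsetP[y yS ->]]; apply/exists_inP.
- exists [set x]; first by rewrite inE imset_f ?orbT.
  rewrite total_k_coalitionC total_k_coalition_singleton_compl // andbT.
  by apply/eqP => /setP /(_ x); rewrite !inE eqxx xS.
- exists (~: S); first by rewrite !inE eqxx.
  rewrite total_k_coalition_singleton_compl // andbT.
  by apply/eqP => /setP /(_ y); rewrite !inE eqxx yS.
Qed.

End SingletonsComplementCoalition.

Lemma regular_coalition_partition (T : finType) (e : rel T) (r k : nat)
    (v : T) :
  irreflexive e -> regular e r -> 1 < k <= r ->
  exists2 P, total_k_coalition_partition e k P & #|P| = r.+2 - k.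
Proof.
move=> e_irr reg /andP[k_gt1 k_le_r].
have /card_geqP[s [uniq_s size_s s_nbhd]] : r.+1 - k <= #|nbhd e v|.
  by rewrite reg; lia.
have card_S : #|[set x in s]| = r.+1 - k.
  by rewrite cardsE -size_s; apply/card_uniqP.
have S_nbhd : [set x in s] \subset nbhd e v.
  by apply/subsetP => x; rewrite inE => /s_nbhd.
exists (singletons_compl [set x in s]).
  apply: (singletons_compl_coalition_partition e_irr reg k_gt1 S_nbhd card_S).
  by rewrite card_S; lia.
by rewrite card_singletons_compl card_S; lia.
Qed.

Lemma TC_eq (T : finType) (e : rel T) k n :
  (forall P, total_k_coalition_partition e k P -> #|P| <= n) ->
  (exists2 P, total_k_coalition_partition e k P & #|P| = n) -> TC e k = n.
Proof.
move=> ub [P tcpP cardP]; apply/anti_leq/andP; split.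
- by apply/bigmax_leqP => Q; apply: ub.
- by rewrite -cardP; apply: leq_bigmax_cond.
Qed.

Theorem theorem3p6 (T : finType) (e : rel T) :
  0 < #|T| -> simple_graph e -> connected_graph e -> cubic e ->
  TC e 2 = 3 /\ TC e 3 = 2.
Proof.
move=> /card_gt0P[v _] [e_sym e_irr] _ cub.
split; apply: TC_eq.
- by move=> P /coalition_partition_card_le3; apply=> // u; rewrite cub.
- exact: regular_coalition_partition v e_irr cub _.
- by move=> P /coalition_partition_card_le2; apply.
- exact: regular_coalition_partition v e_irr cub _.
Qed.
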